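(* Fix $\vartheta_1\in(0,\pi/2)$. The function $\Phi$ is increasing on $[\vartheta_1,\pi-\vartheta_1]$, and $\Phi(\pi-\vartheta_1)=\pi$.
   Context: For $\eta\in[\vartheta_1,\pi-\vartheta_1]$ set $\gamma(\eta)=\sqrt{1-\sin^2\vartheta_1/\sin^2\eta}$ and $\Phi(\eta)=-\eta\,\gamma(\eta)+\arccos\big(\cos\eta/\cos\vartheta_1\big)$ with $\arccos\in[0,\pi]$. *)

From Stdlib Require Import Reals.
Open Scope R_scope.

Definition gamma_ (th1 eta : R) : R :=
  sqrt (1 - (sin th1)^2 / (sin eta)^2).

Definition Phi (th1 eta : R) : R :=
  - eta * gamma_ th1 eta + acos (cos eta / cos th1).

(* On the open interval one computes
     Phi'(eta) = sin^2 th1 (sin eta - eta cos eta) / (sin^3 eta gamma(eta)),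
   which is positive because eta cos eta < sin eta on (0, pi].  Phi is continuous
   on the closed interval (acos is continuous everywhere, also at -1 and 1), so the
   mean value theorem gives strict monotonicity.  At eta = pi - th1 one has
   gamma = 0 and cos eta / cos th1 = -1, whence Phi = acos (-1) = pi. *)

From Stdlib Require Import Reals Lra.
From Coquelicot Require Import Coquelicot.
Open Scope R_scope.

Lemma incr_of_derive_pos (f df : R -> R) (a b : R) :
  (forall t, a < t < b -> is_derive f t (df t)) ->
  (forall t, a < t < b -> 0 < df t) ->
  (forall t, a <= t <= b -> continuity_pt f t) ->
  forall x y, a <= x -> x < y -> y <= b -> f x < f y.
Proof.
intros Hd Hpos Hc x y Hax Hxy Hyb.
assert (Hf : forall c, x < c < y -> derivable_pt f c).
{ intros c Hcxy; exists (df c); apply is_derive_Reals, Hd; lra. }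
destruct (MVT f id x y Hf (fun c _ => derivable_pt_id c)) as [c [Hcxy Heq]];
  [lra | intros; apply Hc; lra | intros; apply continuity_pt_id |].
rewrite derive_pt_id in Heq; unfold id in Heq.
replace (derive_pt f c (Hf c Hcxy)) with (df c) in Heq
  by (symmetry; apply derive_pt_eq_0, is_derive_Reals, Hd; lra).
assert (0 < (y - x) * df c) by (apply Rmult_lt_0_compat; [lra | apply Hpos; lra]).
lra.
Qed.

Lemma sin_gt_mul_cos x : 0 < x <= PI -> x * cos x < sin x.
Proof.
intros Hx.
enough (sin 0 - 0 * cos 0 < sin x - x * cos x)
  by (rewrite sin_0, Rmult_0_l in *; lra).
apply (incr_of_derive_pos (fun t => sin t - t * cos t) (fun t => t * sin t) 0 PI);
  try lra.
- intros t _; auto_derive; [easy | ring].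
- intros t Ht; apply Rmult_lt_0_compat; [lra | apply sin_gt_0; lra].
- intros t _; apply derivable_continuous_pt.
  apply derivable_pt_minus; [apply derivable_pt_sin|].
  apply derivable_pt_mult; [apply derivable_pt_id | apply derivable_pt_cos].
Qed.

Lemma is_derive_acos u : -1 < u < 1 -> is_derive acos u (-1 / sqrt (1 - u²)).
Proof.
intros Hu; apply is_derive_Reals.
apply (derive_pt_eq_1 _ _ _ (derivable_pt_acos u Hu)), derive_pt_acos.
Qed.

Lemma continuity_sqrt : continuity sqrt.
Proof. intros x; apply continuity_pt_filterlim, continuous_sqrt. Qed.

(* [acos_atan] holds for every [x > 0]: beyond 1, [acos x = 0] and [sqrt] of a
   negative number is [0]. *)
Lemma continuity_pt_acos_pos u : 0 < u -> continuity_pt acos u.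
Proof.
intros Hu.
apply continuity_pt_ext_loc with (fun x => atan (sqrt (1 - x²) / x)).
- apply (filter_imp (fun x => 0 < x)); [intros x Hx; symmetry; now apply acos_atan|].
  now apply open_gt.
- apply (continuity_pt_comp (fun x => sqrt (1 - x²) / x) atan).
  + apply continuity_pt_div; [|apply continuity_pt_id|lra].
    apply (continuity_pt_comp (fun x => 1 - x²) sqrt); [|apply continuity_sqrt].
    apply continuity_pt_minus; [apply continuity_pt_const; intros ? ?; reflexivity|].
    apply continuity_pt_mult; apply continuity_pt_id.
  + apply derivable_continuous_pt, derivable_pt_atan.
Qed.

Lemma continuity_acos : continuity acos.
Proof.
intros u.
destruct (Rtotal_order u 0) as [Hu|[Hu|Hu]].
- apply continuity_pt_ext with (fun x => PI - acos (- x)).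
  { intros x. rewrite acos_opp. ring. }
  apply continuity_pt_minus; [apply continuity_pt_const; intros ? ?; reflexivity|].
  apply (continuity_pt_comp Ropp acos); [apply continuity_pt_opp, continuity_pt_id|].
  apply continuity_pt_acos_pos; lra.
- subst; apply derivable_continuous_pt, derivable_pt_acos; lra.
- now apply continuity_pt_acos_pos.
Qed.

Lemma sin_cos_sqr x : sin x ^ 2 + cos x ^ 2 = 1.
Proof. pose proof (sin2_cos2 x); unfold Rsqr in *; lra. Qed.

Section Phi_analysis.

Variable th1 : R.
Hypothesis Hth1 : 0 < th1 < PI / 2.

Lemma sin_th1_pos : 0 < sin th1.
Proof. apply sin_gt_0; lra. Qed.

Lemma cos_th1_pos : 0 < cos th1.
Proof. apply cos_gt_0; lra. Qed.

Lemma sin_th1_lt t : th1 < t < PI - th1 -> sin th1 < sin t.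
Proof.
intros Ht.
destruct (Rle_dec t (PI / 2)).
- apply sin_increasing_1; lra.
- rewrite <- (sin_PI_x t); apply sin_increasing_1; lra.
Qed.

Lemma sin_th1_le t : th1 <= t <= PI - th1 -> sin th1 <= sin t.
Proof.
intros Ht.
destruct (Req_dec t th1) as [->|]; [lra|].
destruct (Req_dec t (PI - th1)) as [->|]; [rewrite sin_PI_x; lra|].
left; apply sin_th1_lt; lra.
Qed.

Lemma cos_sqr_lt t : th1 < t < PI - th1 -> cos t ^ 2 < cos th1 ^ 2.
Proof.
intros Ht.
pose proof (sin_th1_lt t Ht); pose proof sin_th1_pos.
pose proof (sin_cos_sqr t); pose proof (sin_cos_sqr th1); nra.
Qed.

Lemma cos_ratio_lt t : th1 < t < PI - th1 -> -1 < cos t / cos th1 < 1.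
Proof.
intros Ht.
pose proof (cos_sqr_lt t Ht); pose proof cos_th1_pos.
split; apply (Rmult_lt_reg_r (cos th1)); try lra;
  unfold Rdiv; rewrite Rmult_assoc, Rinv_l; nra.
Qed.

Lemma gamma_sqr_pos t : th1 < t < PI - th1 -> 0 < 1 - sin th1 ^ 2 / sin t ^ 2.
Proof.
intros Ht.
pose proof (sin_th1_lt t Ht); pose proof sin_th1_pos.
apply Rlt_0_minus, (Rmult_lt_reg_r (sin t ^ 2)); [nra|].
field_simplify; nra.
Qed.

Lemma gamma_pos t : th1 < t < PI - th1 -> 0 < gamma_ th1 t.
Proof. intros Ht; apply sqrt_lt_R0, gamma_sqr_pos, Ht. Qed.

Lemma sqrt_one_sub_Rsqr_cos_ratio t : th1 < t < PI - th1 ->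
  sqrt (1 - (cos t / cos th1)²) = gamma_ th1 t * sin t / cos th1.
Proof.
intros Ht.
pose proof (sin_th1_lt t Ht); pose proof sin_th1_pos; pose proof cos_th1_pos.
pose proof (gamma_pos t Ht).
rewrite <- (sqrt_Rsqr (gamma_ th1 t * sin t / cos th1)).
2:{ apply Rmult_le_pos; [nra | left; apply Rinv_0_lt_compat; lra]. }
f_equal; unfold Rsqr.
replace (gamma_ th1 t * sin t / cos th1 * (gamma_ th1 t * sin t / cos th1))
  with (gamma_ th1 t * gamma_ th1 t * (sin t * sin t) / (cos th1 * cos th1))
  by (field; lra).
unfold gamma_ at 1 2; rewrite sqrt_sqrt by (left; apply gamma_sqr_pos, Ht).
pose proof (sin_cos_sqr t); pose proof (sin_cos_sqr th1).
field_simplify; [|lra|lra].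
f_equal; lra.
Qed.

Lemma is_derive_gamma t : th1 < t < PI - th1 ->
  is_derive (gamma_ th1) t (sin th1 ^ 2 * cos t / (sin t ^ 3 * gamma_ th1 t)).
Proof.
intros Ht.
pose proof (sin_th1_lt t Ht); pose proof sin_th1_pos.
pose proof (gamma_sqr_pos t Ht); pose proof (gamma_pos t Ht).
assert (Harg : 1 + - (sin th1 * (sin th1 * 1) * / (sin t * (sin t * 1)))
  = 1 - sin th1 ^ 2 / sin t ^ 2) by (field; lra).
unfold gamma_ in *; auto_derive; rewrite ?Harg.
- repeat split; nra.
- field; lra.
Qed.

Lemma is_derive_acos_cos_ratio t : th1 < t < PI - th1 ->
  is_derive (fun e => acos (cos e / cos th1)) t (/ gamma_ th1 t).
Proof.
intros Ht.
pose proof (sin_th1_lt t Ht); pose proof sin_th1_pos; pose proof cos_th1_pos.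
pose proof (gamma_pos t Ht).
replace (/ gamma_ th1 t)
  with ((- sin t / cos th1) * (-1 / sqrt (1 - (cos t / cos th1)²))).
2:{ rewrite sqrt_one_sub_Rsqr_cos_ratio by exact Ht; field; repeat split; lra. }
apply (is_derive_comp acos (fun e => cos e / cos th1)).
- apply is_derive_acos, cos_ratio_lt, Ht.
- auto_derive; [lra | field; lra].
Qed.

Definition Phi_deriv (t : R) : R :=
  sin th1 ^ 2 * (sin t - t * cos t) / (sin t ^ 3 * gamma_ th1 t).

Lemma is_derive_Phi t : th1 < t < PI - th1 -> is_derive (Phi th1) t (Phi_deriv t).
Proof.
intros Ht; unfold Phi_deriv.
pose proof (sin_th1_lt t Ht); pose proof sin_th1_pos.
pose proof (gamma_pos t Ht).
replace (sin th1 ^ 2 * (sin t - t * cos t) / (sin t ^ 3 * gamma_ th1 t))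
  with ((-1 * gamma_ th1 t + - t * (sin th1 ^ 2 * cos t / (sin t ^ 3 * gamma_ th1 t)))
        + / gamma_ th1 t).
2:{ assert (Hg2 : gamma_ th1 t * gamma_ th1 t = 1 - sin th1 ^ 2 / sin t ^ 2)
      by (apply sqrt_sqrt; left; apply gamma_sqr_pos, Ht).
    replace (-1 * gamma_ th1 t + - t * (sin th1 ^ 2 * cos t / (sin t ^ 3 * gamma_ th1 t))
             + / gamma_ th1 t)
      with ((1 - gamma_ th1 t * gamma_ th1 t - t * sin th1 ^ 2 * cos t / sin t ^ 3)
            / gamma_ th1 t) by (field; split; lra).
    rewrite Hg2; field; split; lra. }
apply (is_derive_plus (fun e => - e * gamma_ th1 e)).
- apply (is_derive_mult (fun e => - e) (gamma_ th1)).
  + auto_derive; [easy | ring].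
  + apply is_derive_gamma, Ht.
  + intros; apply Rmult_comm.
- apply is_derive_acos_cos_ratio, Ht.
Qed.

Lemma continuity_pt_Phi t : th1 <= t <= PI - th1 -> continuity_pt (Phi th1) t.
Proof.
intros Ht.
pose proof (sin_th1_le t Ht); pose proof sin_th1_pos.
apply (continuity_pt_plus (fun e => - e * gamma_ th1 e) (fun e => acos (cos e / cos th1))).
- apply continuity_pt_mult; [apply continuity_pt_opp, continuity_pt_id|].
  apply (continuity_pt_comp (fun e => 1 - sin th1 ^ 2 / sin e ^ 2) sqrt).
  + apply derivable_continuous_pt, ex_derive_Reals_0.
    auto_derive; nra.
  + apply continuity_sqrt.
- apply (continuity_pt_comp (fun e => cos e / cos th1) acos); [|apply continuity_acos].
  apply derivable_continuous_pt, ex_derive_Reals_0.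
  auto_derive; lra.
Qed.

Lemma Phi_right_end : Phi th1 (PI - th1) = PI.
Proof.
pose proof sin_th1_pos; pose proof cos_th1_pos.
unfold Phi, gamma_; rewrite sin_PI_x, Rtrigo_facts.cos_pi_minus.
replace (1 - sin th1 ^ 2 / sin th1 ^ 2) with 0 by (field; lra).
replace (- cos th1 / cos th1) with (- (1)) by (field; lra).
rewrite sqrt_0, acos_opp, acos_1; ring.
Qed.

Lemma Phi_deriv_pos t : th1 < t < PI - th1 -> 0 < Phi_deriv t.
Proof.
intros Ht.
pose proof (sin_th1_lt t Ht); pose proof sin_th1_pos.
pose proof (sin_gt_mul_cos t ltac:(lra)).
apply Rdiv_lt_0_compat; apply Rmult_lt_0_compat;
  try apply pow_lt; try apply gamma_pos; lra.
Qed.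

End Phi_analysis.

Theorem corollary5p11 (th1 : R) (Hth1 : 0 < th1 < PI / 2) :
  (forall x y : R, th1 <= x -> x < y -> y <= PI - th1 ->
     Phi th1 x < Phi th1 y)
  /\ Phi th1 (PI - th1) = PI.
Proof.
split; [|exact (Phi_right_end th1 Hth1)].
apply (incr_of_derive_pos (Phi th1) (Phi_deriv th1)).
- exact (is_derive_Phi th1 Hth1).
- exact (Phi_deriv_pos th1 Hth1).
- exact (continuity_pt_Phi th1 Hth1).
Qed.
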